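(* Let $\mathcal{A}$ be an $\ell_A$-quasi-cyclic code over $\mathbb{F}_q$ of length $n_A=\ell_A m_A$ and $\mathcal{B}$ an $\ell_B$-quasi-cyclic code over $\mathbb{F}_q$ of length $n_B=\ell_B m_B$, with $\gcd(n_A,n_B)=1$, and let integers $a,b$ satisfy $a n_A+b n_B=1$. Put $\ell=\ell_A\ell_B$, $m=m_Am_B$, $n=n_An_B$. Let $(m_{i,j})_{0\le i<n_B,\,0\le j<n_A}$ be an $n_B\times n_A$ matrix over $\mathbb{F}_q$ each of whose rows is in $\mathcal{A}$ and each of whose columns is in $\mathcal{B}$, and let $$c(X)\equiv\sum_{i=0}^{n_B-1}\sum_{j=0}^{n_A-1}m_{i,j}X^{\psi(i,j)}\pmod{X^n-1},\qquad \psi(i,j)=i a n_A\ell_A+j b n_B\ell_B \bmod n.$$ For $g\in\{0,\dots,\ell_B-1\}$, $h\in\{0,\dots,\ell_A-1\}$ define $$c_{g,h}(X)\equiv X^{\theta(g,h)}\sum_{i=0}^{m_B-1}\sum_{j=0}^{m_A-1}m_{i\ell_B+g,\,j\ell_A+h}X^{\chi(i,j)}\pmod{X^m-1},$$ where $\theta(g,h)=g(-b m_B)+h(-a m_A)\bmod m$ and $\chi(i,j)=i a n_A+j b n_B\bmod m$. Then $$c(X)\equiv\sum_{g=0}^{\ell_B-1}\sum_{h=0}^{\ell_A-1}c_{g,h}(X^{\ell_A\ell_B})X^{g\ell_A+h\ell_B}\pmod{X^n-1}.$$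
   Context: An $\ell$-quasi-cyclic code of length $\ell m$ over $\mathbb{F}_q$ is a linear code closed under cyclic shift of coordinates by $\ell$ positions. Exponents of $X$ are taken modulo the indicated modulus (so $X^{k}$ for negative $k$ means $X^{k\bmod m}$ modulo $X^m-1$, resp. modulo $n$ for $X^n-1$). *)

From HB Require Import structures.
From mathcomp Require Import all_boot all_order all_algebra.
Set Implicit Arguments. Unset Strict Implicit. Unset Printing Implicit Defensive.
Import GRing.Theory.
Local Open Scope ring_scope.

Definition rv_at (R : nzRingType) (n : nat) (c : 'rV[R]_n) (i : nat) : R :=
  if insub i is Some i' then c 0 i' else 0.

Definition mx_at (R : nzRingType) (r s : nat) (M : 'M[R]_(r, s)) (i j : nat) : R :=
  match insub i, insub j with
  | Some i', Some j' => M i' j'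
  | _, _ => 0
  end.

(* Cyclic shift of the coordinates of c (length n) by l positions:
   (qshift l c)_k = c_{k - l mod n}. *)
Definition qshift (R : nzRingType) (n : nat) (l : nat) (c : 'rV[R]_n) : 'rV[R]_n :=
  \row_(k < n) rv_at c ((k + (n - l %% n)) %% n).

Definition quasi_cyclic (F : fieldType) (l m : nat) (C : {vspace 'rV[F]_(l * m)}) : Prop :=
  forall c : 'rV[F]_(l * m), c \in C -> qshift l c \in C.

Definition emod (k : int) (n : nat) : nat := `|(k %% n%:Z)%Z|%N.

From HB Require Import structures.
From mathcomp Require Import all_boot all_order all_algebra.
From mathcomp Require Import ring.
Import GRing.Theory.
Local Open Scope ring_scope.

(* The Bezout relation a nA + b nB = 1 makes the exponent of the entry in
   row i lB + g and column j lA + h of the matrix split exactly, over the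
   integers, as psi = lA lB (theta(g,h) + chi(i,j)) + g lA + h lB.  Since
   substituting X^(lA lB) into X^m - 1 gives X^n - 1, reducing c_{g,h} modulo
   X^m - 1 before the substitution is harmless modulo X^n - 1, and the
   identity becomes a regrouping of the double sum defining c by the residues
   of the row index mod lB and of the column index mod lA. *)

Lemma big_ord_mul_split (V : nmodType) (p q : nat) (f : nat -> V) :
  \sum_(i < p * q) f i = \sum_(i < q) \sum_(g < p) f (i * p + g)%N.
Proof.
rewrite -(big_mkord xpredT f) mulnC big_nat_mul big_mkord.
apply: eq_bigr => i _.
rewrite -{1}[(i * p)%N]add0n big_addn mulSn addnK big_mkord.
by apply: eq_bigr => g _; rewrite addnC.
Qed.

Lemma big_ord_mul_split2 (V : nmodType) (p q r s : nat) (f : nat -> nat -> V) :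
  \sum_(i < p * q) \sum_(j < r * s) f i j =
  \sum_(g < p) \sum_(h < r) \sum_(i < q) \sum_(j < s) f (i * p + g)%N (j * r + h)%N.
Proof.
rewrite (@big_ord_mul_split _ p q (fun i => \sum_(j < r * s) f i j)) exchange_big.
apply: eq_bigr => g _.
under eq_bigr => i _ do
  rewrite (@big_ord_mul_split _ r s (f (i * p + g)%N)) exchange_big.
by rewrite exchange_big.
Qed.

Section PolyMod.
Variable F : fieldType.
Implicit Types (p e r : {poly F}).

Lemma modp_sum (I : Type) (s : seq I) (P : pred I) (f : I -> {poly F}) e :
  (\sum_(i <- s | P i) f i) %% e = \sum_(i <- s | P i) (f i %% e).
Proof. exact: (big_morph (fun p => p %% e) (modpD e) (mod0p e)). Qed.

Lemma comp_modp p e r : ((p %% e) \Po r) %% (e \Po r) = (p \Po r) %% (e \Po r).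
Proof.
by rewrite [in RHS](divp_eq p e) comp_polyD comp_polyM modpD modp_mull add0r.
Qed.

Lemma comp_Xn_sub1 (m l : nat) : ('X^m - 1 : {poly F}) \Po 'X^l = 'X^(m * l) - 1.
Proof. by rewrite comp_polyB comp_Xn_poly -exprM -polyC1 comp_polyC mulnC. Qed.

Lemma modp_XkXn1 (n k : nat) : 'X^k %% ('X^n - 1 : {poly F}) = 'X^(k %% n) %% ('X^n - 1).
Proof.
rewrite {1}(divn_eq k n); elim: (k %/ n)%N => [|q IH]; first by rewrite add0n.
have -> : ('X^(q.+1 * n + k %% n) : {poly F}) =
    'X^(q * n + k %% n) * ('X^n - 1) + 'X^(q * n + k %% n).
  by rewrite mulrBr mulr1 subrK -exprD mulSn [in RHS]addnC addnA.
by rewrite modpD modp_mull add0r IH.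
Qed.

Lemma comp_modp_Xn_sub1 (p : {poly F}) (m l s : nat) :
  ((p %% ('X^m - 1) \Po 'X^l) * 'X^s) %% ('X^(m * l) - 1) =
  ((p \Po 'X^l) * 'X^s) %% ('X^(m * l) - 1).
Proof. by rewrite -comp_Xn_sub1 mulrC -modp_mul comp_modp modp_mul mulrC. Qed.

Lemma comp_Xn_sum2 (I J : finType) (w : I -> J -> F)
    (e : I -> J -> nat) (t l s : nat) :
  (('X^t * \sum_i \sum_j w i j *: 'X^(e i j)) \Po 'X^l) * 'X^s =
  \sum_i \sum_j w i j *: 'X^(l * t + l * e i j + s) :> {poly F}.
Proof.
rewrite comp_polyM comp_Xn_poly -exprM raddf_sum mulr_sumr mulr_suml.
apply: eq_bigr => i _; rewrite raddf_sum mulr_sumr mulr_suml.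
apply: eq_bigr => j _.
by rewrite /= comp_polyZ comp_Xn_poly -exprM -scalerAr -scalerAl -!exprD.
Qed.

End PolyMod.

Lemma emodE (x : int) (n : nat) : (0 < n)%N -> (emod x n)%:Z = (x %% n%:Z)%Z.
Proof. by move=> n_gt0; rewrite /emod gez0_abs // modz_ge0 // eqz_nat -lt0n. Qed.

Lemma modp_Xk_emod (F : fieldType) (n k : nat) (x : int) : (0 < n)%N ->
  (k%:Z = x %[mod n%:Z])%Z ->
  'X^k %% ('X^n - 1 : {poly F}) = 'X^(emod x n) %% ('X^n - 1).
Proof.
move=> n_gt0 kx; rewrite modp_XkXn1 [RHS]modp_XkXn1; congr ('X^_ %% _).
by apply/eqP; rewrite -eqz_nat -!modz_nat kx emodE // modz_mod.
Qed.

Lemma mulz_emod (x : int) (l m : nat) : (0 < l)%N -> (0 < m)%N ->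
  ((l * emod x m)%N%:Z = l%:Z * x %[mod (l * m)%N%:Z])%Z.
Proof.
by move=> l_gt0 m_gt0; rewrite PoszM emodE // mulz_modr // -PoszM modz_mod.
Qed.

Section Exponents.
Variables (lA mA lB mB : nat) (a b : int).
Hypothesis bezout : a * (lA * mA)%:Z + b * (lB * mB)%:Z = 1.

Lemma exponent_split (i j g h : nat) :
  (i * lB + g)%:Z * a * (lA * mA)%:Z * lA%:Z
    + (j * lA + h)%:Z * b * (lB * mB)%:Z * lB%:Z =
  (lA * lB)%:Z * (g%:Z * - (b * mB%:Z) + h%:Z * - (a * mA%:Z))
    + (lA * lB)%:Z * (i%:Z * a * (lA * mA)%:Z + j%:Z * b * (lB * mB)%:Z)
    + (g * lA + h * lB)%:Z.
Proof.
apply/eqP; rewrite -subr_eq0; apply/eqP.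
transitivity ((g * lA + h * lB)%:Z * (a * (lA * mA)%:Z + b * (lB * mB)%:Z - 1)).
  by rewrite !PoszD !PoszM; ring.
by rewrite bezout subrr mulr0.
Qed.

Hypotheses (lA_gt0 : (0 < lA)%N) (lB_gt0 : (0 < lB)%N).
Hypotheses (mA_gt0 : (0 < mA)%N) (mB_gt0 : (0 < mB)%N).

Lemma exponent_split_emod (i j g h : nat) :
  ((lA * lB * emod (g%:Z * - (b * mB%:Z) + h%:Z * - (a * mA%:Z)) (mA * mB)
    + lA * lB * emod (i%:Z * a * (lA * mA)%:Z + j%:Z * b * (lB * mB)%:Z) (mA * mB)
    + (g * lA + h * lB))%N%:Z =
   (i * lB + g)%:Z * a * (lA * mA)%:Z * lA%:Z
     + (j * lA + h)%:Z * b * (lB * mB)%:Z * lB%:Z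
   %[mod (lA * lB * (mA * mB))%N%:Z])%Z.
Proof.
have L_gt0 : (0 < lA * lB)%N by rewrite muln_gt0 lA_gt0.
have m_gt0 : (0 < mA * mB)%N by rewrite muln_gt0 mA_gt0.
rewrite exponent_split !PoszD -modzDml -[in RHS]modzDml.
by congr (modz (_ + _) _); rewrite -modzDm !mulz_emod // modzDm.
Qed.

End Exponents.

Theorem lemma4 (F : finFieldType) (lA mA lB mB : nat)
    (A : {vspace 'rV[F]_(lA * mA)}) (B : {vspace 'rV[F]_(lB * mB)})
    (a b : int) (M : 'M[F]_(lB * mB, lA * mA)) :
  (0 < lA)%N -> (0 < mA)%N -> (0 < lB)%N -> (0 < mB)%N ->
  quasi_cyclic A -> quasi_cyclic B ->
  coprime (lA * mA) (lB * mB) ->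
  a * (lA * mA)%:Z + b * (lB * mB)%:Z = 1 ->
  (forall i, row i M \in A) ->
  (forall j, (col j M)^T \in B) ->
  let nA := (lA * mA)%N in
  let nB := (lB * mB)%N in
  let m := (mA * mB)%N in
  let n := (nA * nB)%N in
  let psi (i j : nat) : nat :=
    emod (i%:Z * a * nA%:Z * lA%:Z + j%:Z * b * nB%:Z * lB%:Z) n in
  let theta (g h : nat) : nat :=
    emod (g%:Z * (- (b * mB%:Z)) + h%:Z * (- (a * mA%:Z))) m in
  let chi (i j : nat) : nat :=
    emod (i%:Z * a * nA%:Z + j%:Z * b * nB%:Z) m in
  let c : {poly F} :=
    \sum_(i < nB) \sum_(j < nA) M i j *: 'X^(psi i j) in
  let cgh (g h : nat) : {poly F} :=
    ('X^(theta g h) *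
      \sum_(i < mB) \sum_(j < mA)
         mx_at M (i * lB + g)%N (j * lA + h)%N *: 'X^(chi i j))
    %% ('X^m - 1) in
  c %% ('X^n - 1) =
  (\sum_(g < lB) \sum_(h < lA)
      (cgh g h \Po 'X^(lA * lB)) * 'X^(g * lA + h * lB)) %% ('X^n - 1).
Proof.
move=> lA_gt0 mA_gt0 lB_gt0 mB_gt0 _ _ _ bezout _ _ nA nB m n psi theta chi c cgh.
have nE : n = (m * (lA * lB))%N by rewrite /n /nA /nB /m mulnACA mulnC.
have n_gt0 : (0 < n)%N by rewrite nE !muln_gt0 mA_gt0 mB_gt0 lA_gt0.
have termE (g h : nat) :
    ((cgh g h \Po 'X^(lA * lB)) * 'X^(g * lA + h * lB)) %% ('X^n - 1) =
    (\sum_(i < mB) \sum_(j < mA) mx_at M (i * lB + g)%N (j * lA + h)%N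
       *: 'X^(psi (i * lB + g)%N (j * lA + h)%N)) %% ('X^n - 1).
  rewrite nE comp_modp_Xn_sub1 comp_Xn_sum2 -nE !modp_sum.
  apply: eq_bigr => i _; rewrite !modp_sum; apply: eq_bigr => j _.
  rewrite !modpZl; congr (_ *: _); apply: modp_Xk_emod => //.
  by rewrite nE [(m * _)%N]mulnC; apply: exponent_split_emod.
rewrite [RHS]modp_sum.
under eq_bigr => g _ do rewrite modp_sum.
under eq_bigr => g _ do under eq_bigr => h _ do rewrite termE.
under eq_bigr => g _ do rewrite -modp_sum.
rewrite -modp_sum /c; congr (_ %% _).
rewrite -(@big_ord_mul_split2 _ lB mB lA mA (fun i j => mx_at M i j *: 'X^(psi i j))).
by apply: eq_bigr => i _; apply: eq_bigr => j _; rewrite /mx_at !valK.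
Qed.
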